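(* Let $R\subseteq T$ be an integral extension of rings, let $Q\in\mathrm{Spec}(T)$ and $P=Q\cap R$. Assume that $R$ has a maximal subring $S$ which is integrally closed in $R$, with $(S:R)=P$ and $U(R/P)\not\subseteq S/P$. Then $T$ has a maximal subring $V$ which is integrally closed in $T$ with $(V:T)=Q$.
   Context: All rings are commutative with $1\neq0$ and subrings are unital. A maximal subring of a ring $A$ is a proper subring maximal with respect to inclusion among proper subrings of $A$. For a ring extension $S\subseteq R$, the conductor is $(S:R)=\{x\in R\mid Rx\subseteq S\}$. $U(A)$ denotes the unit group of $A$. *)

From HB Require Import structures.
From mathcomp Require Import all_boot all_order all_algebra.
Set Implicit Arguments. Unset Strict Implicit. Unset Printing Implicit Defensive.
Import GRing.Theory.
Local Open Scope ring_scope.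

(* Subsets of a commutative ring T are represented as Prop-valued predicates.
   A ring R (with ring extension R ⊆ T) is represented as a unital subring of T. *)

Section Defs.
Variable T : comNzRingType.

Definition subset (A B : T -> Prop) : Prop := forall x, A x -> B x.

Definition is_subring (A : T -> Prop) : Prop :=
  [/\ A 1, (forall x y, A x -> A y -> A (x - y)) & (forall x y, A x -> A y -> A (x * y))].

Definition subring_of (S R : T -> Prop) : Prop := is_subring S /\ subset S R.

Definition proper_in (S R : T -> Prop) : Prop := exists x, R x /\ ~ S x.

Definition maximal_subring (S R : T -> Prop) : Prop :=
  [/\ subring_of S R, proper_in S R &
      forall S' : T -> Prop, subring_of S' R -> subset S S' -> proper_in S' R ->
        subset S' S].

Definition integral_over (A : T -> Prop) (x : T) : Prop :=
  exists p : {poly T}, [/\ p \is monic, (forall i, A p`_i) & root p x].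

Definition integrally_closed_in (S R : T -> Prop) : Prop :=
  forall x, R x -> integral_over S x -> S x.

Definition integral_extension (R : T -> Prop) : Prop :=
  forall t : T, integral_over R t.

Definition conductor (S R : T -> Prop) (x : T) : Prop :=
  R x /\ forall r, R r -> S (r * x).

Definition prime_ideal (Q : T -> Prop) : Prop :=
  [/\ Q 0, (forall x y, Q x -> Q y -> Q (x + y)),
      (forall t x, Q x -> Q (t * x)), ~ Q 1 &
      (forall x y, Q (x * y) -> Q x \/ Q y)].

End Defs.

From HB Require Import structures.
From mathcomp Require Import all_boot all_order all_algebra.
From mathcomp Require Import boolp.
From mathcomp Require classical_sets.
From mathcomp Require Import ring.
(* Let [u] in [R \ S] be invertible modulo [P], with [u y = 1] modulo [P].
   Maximality of [S] gives [R = S[u]], and [y] lies in [S], since otherwise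
   [R = S[y]] would make [u] integral over [S].  By Zorn's lemma pick a subring
   [V] of [T] containing [S + Q] and maximal among those avoiding [u].  As [u] is
   invertible modulo [Q ⊆ V] with inverse [y ∈ V], it is not integral over [V],
   so [V] is integrally closed in [T].  For [t] in [T], a monic relation over
   [R ⊆ V[u]] becomes, after multiplication by a power [y ^ M], a relation
   showing [y ^ M t] integral over [V]; hence [y ^ M t ∈ V] and
   [t = u ^ M (y ^ M t)] modulo [Q], so [T = V[u]] and [V] is maximal.  Finally
   [V ∩ R = S], and if [T x ⊆ V] with [x ∉ Q], the constant term of a relation
   of [x] over [R] can be taken outside [Q] yet lands in [(S : R) = P]. *)

Set Implicit Arguments.
Unset Strict Implicit.
Import GRing.Theory.
Local Open Scope ring_scope.

Section SubringPredicates.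
Variables (T : comNzRingType) (A : T -> Prop).
Hypothesis subA : is_subring A.

Lemma subring1 : A 1. Proof. by case: subA. Qed.

Lemma subringB x y : A x -> A y -> A (x - y). Proof. by case: subA => _ + _; apply. Qed.

Lemma subringM x y : A x -> A y -> A (x * y). Proof. by case: subA => _ _; apply. Qed.

Lemma subring0 : A 0. Proof. by rewrite -(subrr 1); apply: subringB; apply: subring1. Qed.

Lemma subringN x : A x -> A (- x).
Proof. by rewrite -sub0r; apply: subringB; apply: subring0. Qed.

Lemma subringD x y : A x -> A y -> A (x + y).
Proof. by move=> Ax Ay; rewrite -[y]opprK; apply: subringB => //; apply: subringN. Qed.

Lemma subringX x n : A x -> A (x ^+ n).
Proof.
move=> Ax; elim: n => [|n IHn]; first by rewrite expr0; apply: subring1.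
by rewrite exprS; apply: subringM.
Qed.

Lemma subring_sum (I : Type) (r : seq I) (P : pred I) (F : I -> T) :
  (forall i, P i -> A (F i)) -> A (\sum_(i <- r | P i) F i).
Proof. by move=> AF; apply: big_ind => //; [apply: subring0 | apply: subringD]. Qed.

Definition poly_over (p : {poly T}) : Prop := forall i, A p`_i.

Lemma poly_overC c : A c -> poly_over c%:P.
Proof. by move=> Ac i; rewrite coefC; case: eqP => // _; apply: subring0. Qed.

Lemma poly_overXn n : poly_over 'X^n.
Proof.
by move=> i; rewrite coefXn; case: eqP => _; [apply: subring1 | apply: subring0].
Qed.

Lemma poly_overD p q : poly_over p -> poly_over q -> poly_over (p + q).
Proof. by move=> Ap Aq i; rewrite coefD; apply: subringD. Qed.

Lemma poly_overB p q : poly_over p -> poly_over q -> poly_over (p - q).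
Proof. by move=> Ap Aq i; rewrite coefB; apply: subringB. Qed.

Lemma poly_overM p q : poly_over p -> poly_over q -> poly_over (p * q).
Proof.
by move=> Ap Aq i; rewrite coefM; apply: subring_sum => j _; apply: subringM.
Qed.

Lemma poly_overZ a p : A a -> poly_over p -> poly_over (a *: p).
Proof. by move=> Aa Ap i; rewrite coefZ; apply: subringM. Qed.

Lemma poly_over_horner p t : poly_over p -> A t -> A p.[t].
Proof.
move=> Ap At; rewrite horner_coef; apply: subring_sum => i _.
by apply: subringM => //; apply: subringX.
Qed.

Lemma integral_over_expr (r : {poly T}) m z :
  poly_over r -> (size r <= m)%N -> z ^+ m = r.[z] -> integral_over A z.
Proof.
move=> Ar szr zm; exists ('X^m - r); split.
- apply/monicP; have szXr : size ('X^m - r) = m.+1.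
    by rewrite size_polyDl ?size_polyXn ?size_polyN.
  rewrite lead_coefE szXr coefB coefXn eqxx (leq_sizeP _ _ szr) ?subr0 //.
- by apply: poly_overB => //; apply: poly_overXn.
- by apply/rootP; rewrite hornerD hornerN hornerXn zm subrr.
Qed.

Definition subring_mem : {pred T} := fun x => `[< A x >].

Lemma subring_mem_closed : subring_closed subring_mem.
Proof.
split; rewrite /subring_mem; first exact/asboolP/subring1.
- by move=> x y /asboolP Ax /asboolP Ay; apply/asboolP; apply: subringB.
- by move=> x y /asboolP Ax /asboolP Ay; apply/asboolP; apply: subringM.
Qed.

HB.instance Definition _ := GRing.isSubringClosed.Build T subring_mem subring_mem_closed.

Record subring_type := SubringElt { subring_val : T; _ : subring_mem subring_val }.
HB.instance Definition _ := [isSub for subring_val].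
HB.instance Definition _ := [Choice of subring_type by <:].
HB.instance Definition _ := [SubChoice_isSubComNzRing of subring_type by <:].

(* MathComp's [integralOver] is stated for ring morphisms, so [A] is realised
   as a ring [subring_type] together with its inclusion into [T]. *)
Definition subring_incl : {rmorphism subring_type -> T} := val.

Let subring_incl_mem (z : subring_type) : A (subring_incl z).
Proof. by case: z => z /= /asboolP. Qed.

Lemma integral_overE z : integral_over A z <-> integralOver subring_incl z.
Proof.
split=> [[p [monp Ap pz]] | [q monq qz]]; last first.
  exists (map_poly subring_incl q); split => //; first exact: monic_map.
  by move=> i; rewrite coef_map; apply: subring_incl_mem.
have memp i : subring_mem p`_i by apply/asboolP.
pose q : {poly subring_type} := \poly_(i < size p) SubringElt (memp i).
have qp : map_poly subring_incl q = p.
  apply/polyP => i; rewrite coef_map coef_poly /=.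
  by case: ltnP => //= szi; rewrite nth_default.
exists q; last by rewrite qp.
apply/monicP/val_inj; rewrite /= -[val _]/(subring_incl _).
by rewrite -lead_coef_map_inj ?qp ?(monicP monp) //; apply: val_inj.
Qed.

Lemma integral_over_horner p t :
  poly_over p -> integral_over A t -> integral_over A p.[t].
Proof.
move=> Ap /integral_overE intt; apply/integral_overE; apply: integral_horner => //.
apply/integral_poly => i; have memp : subring_mem p`_i by apply/asboolP.
by rewrite -[p`_i]/(subring_incl (SubringElt memp)); apply: integral_id.
Qed.

End SubringPredicates.

Section Adjoin.
Variable T : comNzRingType.
Implicit Types A W : T -> Prop.

Definition adjoin A (t z : T) : Prop := exists2 p, poly_over A p & z = p.[t].

Lemma poly_over_sub A W p : (forall z, A z -> W z) -> poly_over A p -> poly_over W p.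
Proof. by move=> AW Ap i; apply: AW. Qed.

Lemma adjoin_subring A t : is_subring A -> is_subring (adjoin A t).
Proof.
move=> subA; split.
- by exists 1%:P; [apply: (poly_overC subA); apply: subring1 | rewrite hornerC].
- move=> _ _ [p Ap ->] [q Aq ->].
  by exists (p - q); [apply: poly_overB | rewrite hornerD hornerN].
- move=> _ _ [p Ap ->] [q Aq ->].
  by exists (p * q); [apply: poly_overM | rewrite hornerM].
Qed.

Lemma adjoin_base A t z : is_subring A -> A z -> adjoin A t z.
Proof. by move=> subA Az; exists z%:P; [apply: poly_overC | rewrite hornerC]. Qed.

Lemma adjoin_elt A t : is_subring A -> adjoin A t t.
Proof. by move=> subA; exists 'X; [apply: (poly_overXn _ 1) | rewrite hornerX]. Qed.

Lemma adjoin_min A W t z :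
  is_subring W -> (forall z, A z -> W z) -> W t -> adjoin A t z -> W z.
Proof.
by move=> subW AW Wt [p Ap ->]; apply: poly_over_horner => //; apply: poly_over_sub Ap.
Qed.

Lemma integral_adjoin A t z :
  is_subring A -> integral_over A t -> adjoin A t z -> integral_over A z.
Proof. by move=> subA intt [p Ap ->]; apply: integral_over_horner. Qed.

Lemma maximal_subring_adjoin S R u z :
  maximal_subring S R -> is_subring R -> R u -> ~ S u -> R z -> adjoin S u z.
Proof.
case=> [[subS SR] _ maxS] subR Ru nSu Rz; apply: contrapT => nSuz.
have subSu : subring_of (adjoin S u) R.
  split=> [|w]; first exact: adjoin_subring.
  by apply: adjoin_min.
apply/nSu/(maxS _ subSu); last exact: adjoin_elt.
- by move=> w; apply: adjoin_base.
- by exists z.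
Qed.

Lemma maximal_subring_cap S R W u z :
  maximal_subring S R -> (forall z, S z -> W z) -> is_subring R -> is_subring W ->
  R u -> ~ W u -> R z -> W z -> S z.
Proof.
case=> [[_ SR] _ maxS] SW subR subW Ru Wu Rz Wz.
have subRW : subring_of (fun w => R w /\ W w) R.
  split=> [|w []//]; split=> [|a b [Ra Wa] [Rb Wb]|a b [Ra Wa] [Rb Wb]].
  - by split; apply: subring1.
  - by split; apply: subringB.
  - by split; apply: subringM.
apply: (maxS _ subRW); last by split.
- by move=> w Sw; split; [apply: SR | apply: SW].
- by exists u; split=> // [[]].
Qed.

End Adjoin.

Section Ideals.
Variable T : comNzRingType.

Definition ideal (I : T -> Prop) : Prop :=
  [/\ I 0, forall x y, I x -> I y -> I (x + y) & forall t x, I x -> I (t * x)].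

Lemma prime_ideal_ideal Q : prime_ideal Q -> ideal Q.
Proof. by case. Qed.

Definition add_ideal (S I : T -> Prop) (z : T) : Prop := exists2 s, S s & I (z - s).

Variable I : T -> Prop.
Hypothesis idI : ideal I.

Lemma ideal0 : I 0. Proof. by case: idI. Qed.

Lemma idealD x y : I x -> I y -> I (x + y). Proof. by case: idI => _ + _; apply. Qed.

Lemma idealMl t x : I x -> I (t * x). Proof. by case: idI => _ _; apply. Qed.

Lemma idealMr t x : I x -> I (x * t). Proof. by rewrite mulrC; apply: idealMl. Qed.

Lemma idealN x : I x -> I (- x). Proof. by rewrite -mulN1r; apply: idealMl. Qed.

Lemma idealB x y : I x -> I y -> I (x - y).
Proof. by move=> Ix Iy; apply/idealD/idealN. Qed.

Lemma ideal_sum (J : Type) (r : seq J) (P : pred J) (F : J -> T) :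
  (forall i, P i -> I (F i)) -> I (\sum_(i <- r | P i) F i).
Proof. by move=> IF; apply: big_ind => //; [apply: ideal0 | apply: idealD]. Qed.

Lemma ideal_expr_sub1 a n : I (a - 1) -> I (a ^+ n - 1).
Proof.
move=> Ia; elim: n => [|n IHn]; first by rewrite expr0 subrr; apply: ideal0.
have -> : a ^+ n.+1 - 1 = a * (a ^+ n - 1) + (a - 1) by rewrite exprS; ring.
by apply: idealD => //; apply: idealMl.
Qed.

Lemma ideal_expr_inv a b n i :
  I (a * b - 1) -> (i <= n)%N -> I (a ^+ n * b ^+ i - a ^+ (n - i)).
Proof.
move=> Iab le_in.
have -> : a ^+ n * b ^+ i - a ^+ (n - i) = a ^+ (n - i) * ((a * b) ^+ i - 1).
  by rewrite exprMn -{1}(subnK le_in) exprD; ring.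
by apply/idealMl/ideal_expr_sub1.
Qed.

Lemma add_ideal_subring S : is_subring S -> is_subring (add_ideal S I).
Proof.
move=> subS; split.
- by exists 1; [apply: subring1 subS | rewrite subrr; apply: ideal0].
- move=> a b [s Ss Is] [t St It]; exists (s - t); first exact: subringB.
  have -> : a - b - (s - t) = (a - s) - (b - t) by ring.
  exact: idealB.
- move=> a b [s Ss Is] [t St It]; exists (s * t); first exact: subringM.
  have -> : a * b - s * t = (a - s) * b + s * (b - t) by ring.
  by apply: idealD; [apply: idealMr | apply: idealMl].
Qed.

End Ideals.

Lemma exists_maximal_subring_avoiding (T : comNzRingType) (B : T -> Prop) u :
  is_subring B -> ~ B u ->
  exists V, [/\ is_subring V, (forall z, B z -> V z), ~ V u &
    forall W, is_subring W -> (forall z, V z -> W z) -> proper_in V W -> W u].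
Proof.
move=> subB nBu.
pose avoiding W := [/\ is_subring W, forall z, B z -> W z & ~ W u].
(* The empty set is admitted so that the union of the empty chain qualifies. *)
have [|V [PV maxV]] := @classical_sets.Zorn_bigcup T
    (fun W => (exists z, W z) -> avoiding W).
  move=> F FP Ftot [z0 [X0 FX0 X0z0]].
  have avF X z : F X -> X z -> avoiding X by move=> FX Xz; apply: FP FX _; exists z.
  have [[subX0 _ _] BX0 _] := avF _ _ FX0 X0z0.
  have common a b : (exists2 X, F X & X a) -> (exists2 X, F X & X b) ->
      exists2 X, F X & [/\ is_subring X, X a & X b].
    move=> [X1 FX1 X1a] [X2 FX2 X2b].
    have [[subX1 _ _] [subX2 _ _]] := (avF _ _ FX1 X1a, avF _ _ FX2 X2b).
    have [X12|X21] := Ftot _ _ FX1 FX2.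
    - by exists X2 => //; split=> //; apply: X12.
    - by exists X1 => //; split=> //; apply: X21.
  split; first split.
  - by exists X0 => //; apply: subring1 subX0.
  - move=> a b Ua Ub; have [X FX [subX Xa Xb]] := common a b Ua Ub.
    by exists X => //; apply: subringB.
  - move=> a b Ua Ub; have [X FX [subX Xa Xb]] := common a b Ua Ub.
    by exists X => //; apply: subringM.
  - by move=> z Bz; exists X0 => //; apply: BX0.
  - by case=> X FX Xu; have [] := avF _ _ FX Xu.
have [subV BV nVu] : avoiding V.
  apply: PV; apply: contrapT => emptyV.
  apply: (maxV B); last by move=> _; split.
  split=> [z Vz|BV]; first by case: emptyV; exists z.
  by apply: emptyV; exists 1; apply/BV/(subring1 subB).
exists V; split=> // W subW VW [z [Wz nVz]]; apply: contrapT => nWu.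
apply: (maxV W); first by split=> // WV; apply/nVz/WV.
by move=> _; split=> // b Bb; apply/VW/BV.
Qed.

Section InverseModuloIdeal.
Variables (T : comNzRingType) (V I : T -> Prop) (u y : T).
Hypotheses (subV : is_subring V) (idI : ideal I) (Vy : V y) (Iuy : I (u * y - 1)).

Let Iyu : I (y * u - 1). Proof. by rewrite mulrC. Qed.

Lemma integral_inverse_mod : (forall z, I z -> V z) -> integral_over V u -> V u.
Proof.
move=> IV [p [monp Vp pu0]].
have szp : size p = (size p).-1.+1 by rewrite prednK // size_poly_gt0 monic_neq0.
set n := (size p).-1 in szp.
have pn : p`_n = 1 by move/monicP: monp; rewrite lead_coefE szp.
pose v := \sum_(i < n) p`_i * y ^+ (n - i.+1).
have Vv : V v by apply: subring_sum => // i _; apply: subringM => //; apply: subringX.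
have Iyv : I (y * v + 1).
  have : y ^+ n * p.[u] = 0 by rewrite (rootP pu0) mulr0.
  rewrite horner_coef szp mulr_sumr => pu.
  have -> : y * v + 1 = \sum_(i < n.+1) y ^+ n * (p`_i * u ^+ i)
      - \sum_(i < n.+1) p`_i * (y ^+ n * u ^+ i - y ^+ (n - i)).
    rewrite -sumrB big_ord_recr /= subnn pn /v mulr_sumr; congr (_ + _); last by ring.
    by apply: eq_bigr => i _; rewrite -(subnSK (ltn_ord i)) exprS; ring.
  rewrite pu sub0r; apply: (idealN idI); apply: (ideal_sum idI) => i _.
  by apply: (idealMl idI); apply: (ideal_expr_inv idI Iyu); rewrite -ltnS.
have -> : u = (u * (y * v + 1) - v * (u * y - 1)) - v by ring.
by apply: subringB => //; apply/IV/(idealB idI); apply: (idealMl idI).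
Qed.

Lemma adjoin_inverse_mod a : adjoin V u a ->
  exists M, forall M', (M <= M')%N -> exists2 v, V v & I (y ^+ M' * a - v).
Proof.
case=> p Vp ->; exists (size p) => M le_pM.
exists (\sum_(j < M) p`_j * y ^+ (M - j)).
  by apply: subring_sum => // j _; apply: subringM => //; apply: subringX.
rewrite (horner_coef_wide _ le_pM) mulr_sumr -sumrB; apply: (ideal_sum idI) => j _.
have -> : y ^+ M * (p`_j * u ^+ j) - p`_j * y ^+ (M - j) =
    p`_j * (y ^+ M * u ^+ j - y ^+ (M - j)) by ring.
by apply: (idealMl idI); apply: (ideal_expr_inv idI Iyu); apply: ltnW.
Qed.

End InverseModuloIdeal.

(* [z ^ n * p(t) = 0] is a monic relation for [z * t] with coefficients
   [z ^ (n - i) * p_i]. *)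
Lemma integral_scale (T : comNzRingType) (V : T -> Prop) (p : {poly T}) t z :
  is_subring V -> p \is monic -> root p t ->
  (forall i, (i < (size p).-1)%N -> V (z ^+ ((size p).-1 - i) * p`_i)) ->
  integral_over V (z * t).
Proof.
move=> subV monp pt0 Vc.
have szp : size p = (size p).-1.+1 by rewrite prednK // size_poly_gt0 monic_neq0.
set n := (size p).-1 in szp Vc.
have pn : p`_n = 1 by move/monicP: monp; rewrite lead_coefE szp.
have : z ^+ n * p.[t] = 0 by rewrite (rootP pt0) mulr0.
rewrite horner_coef szp mulr_sumr big_ord_recr /= pn mul1r -exprMn.
have -> : \sum_(i < n) z ^+ n * (p`_i * t ^+ i) =
    \sum_(i < n) z ^+ (n - i) * p`_i * (z * t) ^+ i.
  apply: eq_bigr => i _; have -> : z ^+ n = z ^+ (n - i) * z ^+ i.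
    by rewrite -exprD subnK // ltnW.
  by rewrite exprMn; ring.
move/eqP; rewrite addrC addr_eq0 => /eqP ztn.
apply: (@integral_over_expr _ _ subV (\poly_(i < n) - (z ^+ (n - i) * p`_i)) n).
- move=> i; rewrite coef_poly; case: ltnP => lt_in; last exact: subring0 subV.
  by apply: (subringN subV); apply: Vc.
- exact: size_poly.
- by rewrite ztn horner_poly -sumrN; apply: eq_bigr => i _; rewrite mulNr.
Qed.

Lemma ex_common_bound (P : nat -> nat -> Prop) n :
  (forall i, (i < n)%N -> exists M, forall M', (M <= M')%N -> P i M') ->
  exists M, forall i, (i < n)%N -> P i M.
Proof.
move=> evP; suff [M PM] : exists M, forall M', (M <= M')%N -> forall i, (i < n)%N -> P i M'.
  by exists M; apply: PM.
elim: n evP => [|n IHn] evP; first by exists 0%N.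
have [M1 PM1] := IHn (fun i lt_in => evP i (ltnW lt_in)).
have [M2 PM2] := evP n (ltnSn n).
exists (maxn M1 M2) => M; rewrite geq_max => /andP[le1 le2] i.
by rewrite ltnS leq_eqVlt => /orP[/eqP -> | /PM1]; [apply: PM2 | apply].
Qed.

Lemma horner_drop_poly1 (T : comNzRingType) (p : {poly T}) x :
  p.[x] = p`_0 + (drop_poly 1 p).[x] * x.
Proof.
rewrite -{1}(poly_take_drop 1 p) hornerD hornerM hornerXn expr1; congr (_ + _).
by rewrite (horner_coef_wide _ (size_take_poly 1 p)) big_ord1 coef_take_poly expr0 mulr1.
Qed.

(* Divide the relation by [x] as long as its constant term lies in [Q]; this
   stops because the leading coefficient [1] is not in [Q]. *)
Lemma prime_relation_const (T : comNzRingType) (A Q : T -> Prop) (p : {poly T}) x :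
  prime_ideal Q -> ~ Q x -> p \is monic -> poly_over A p -> Q p.[x] ->
  exists2 q, poly_over A q & Q q.[x] /\ ~ Q q`_0.
Proof.
move=> primeQ nQx; have [Q0 _ _ nQ1 Qprime] := primeQ.
elim: {p}(size p) {-2}p (leqnn (size p)) => [|n IHn] p szp monp Ap Qpx.
  by move: (monic_neq0 monp); rewrite -size_poly_eq0 -leqn0 szp.
have [Qp0|] := pselect (Q p`_0); last by exists p.
have /Qprime[|//] : Q ((drop_poly 1 p).[x] * x).
  have -> : (drop_poly 1 p).[x] * x = p.[x] - p`_0.
    by rewrite [p.[x]]horner_drop_poly1; ring.
  exact: (idealB (prime_ideal_ideal primeQ)).
have sz2 : (1 < size p)%N.
  rewrite ltnNge; apply/negP => szp1; apply: nQ1.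
  have sz1 : size p = 1%N.
    by apply/eqP; rewrite eqn_leq szp1 size_poly_gt0 (monic_neq0 monp).
  by move/monicP: monp; rewrite lead_coefE sz1 => <-.
apply: IHn => [||i]; first by rewrite size_drop_poly leq_subLR.
- apply/monicP; rewrite lead_coefE size_drop_poly coef_drop_poly addn1.
  by rewrite prednK ?subn_gt0 // subn1; apply/monicP.
- by rewrite coef_drop_poly.
Qed.

Section MaximalSubringOfT.
Variables (T : comNzRingType) (R Q S : T -> Prop) (u y : T).
Hypotheses (subR : is_subring R) (intR : integral_extension R)
  (primeQ : prime_ideal Q) (maxS : maximal_subring S R)
  (icS : integrally_closed_in S R)
  (condS : forall x, conductor S R x <-> Q x /\ R x)
  (Ru : R u) (Ry : R y) (Quy : Q (u * y - 1)) (nSu : ~ S u).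

Let idQ : ideal Q := prime_ideal_ideal primeQ.
Let subS : is_subring S. Proof. by case: maxS => [[]]. Qed.
Let SR z : S z -> R z. Proof. by case: maxS => [[_ SRs] _ _]; apply: SRs. Qed.

Lemma contraction_sub_S z : Q z -> R z -> S z.
Proof.
move=> Qz Rz; have [_ /(_ 1 (subring1 subR))] := proj2 (condS z) (conj Qz Rz).
by rewrite mul1r.
Qed.

Lemma inverse_mod_in_S : S y.
Proof.
apply: contrapT => nSy.
have [p Sp up] := maximal_subring_adjoin maxS subR Ry nSy Ru.
set n := size p.
(* From [u = p(y)] and [u y = 1] modulo [Q]: [u ^ n.+1 = \sum_i p_i u ^ (n - i)]
   modulo [Q :&: R], which lies in [S]; so [u] is integral over [S]. *)
pose d := u ^+ n.+1 - \sum_(i < n) p`_i * u ^+ (n - i).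
have Sd : S d.
  apply: contraction_sub_S.
    have -> : d = \sum_(i < n) p`_i * (u ^+ n * y ^+ i - u ^+ (n - i)).
      rewrite /d exprSr {2}up horner_coef mulr_sumr -sumrB.
      by apply: eq_bigr => i _; ring.
    apply: (ideal_sum idQ) => i _; apply: (idealMl idQ).
    by apply: (ideal_expr_inv idQ Quy); apply: ltnW.
  apply: (subringB subR); first exact: subringX.
  apply: (subring_sum subR) => i _.
  by apply: (subringM subR); [apply/SR/Sp | apply: subringX].
pose r := \sum_(i < n) p`_i *: 'X^(n - i) + d%:P.
apply/nSu/icS => //; apply: (@integral_over_expr _ _ subS r n.+1).
- apply: (poly_overD subS); last exact: poly_overC.
  move=> k; rewrite coef_sum; apply: (subring_sum subS) => i _.
  by apply: (poly_overZ subS) => //; apply: poly_overXn.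
- rewrite (leq_trans (size_polyD _ _)) // geq_max (leq_trans (size_polyC_leq1 _)) // andbT.
  rewrite (leq_trans (size_sum _ _ _)) //; apply/bigmax_leqP => i _.
  by rewrite (leq_trans (size_scale_leq _ _)) // size_polyXn ltnS leq_subr.
- rewrite hornerD horner_sum hornerC /d.
  under eq_bigr do rewrite hornerZ hornerXn.
  by rewrite addrC subrK.
Qed.

Section MaximalAvoidingU.
Variable V : T -> Prop.
Hypotheses (subV : is_subring V) (SV : forall z, S z -> V z)
  (QV : forall z, Q z -> V z) (nVu : ~ V u)
  (maxV : forall W, is_subring W -> (forall z, V z -> W z) -> proper_in V W -> W u).

Let Vy : V y := SV inverse_mod_in_S.

Lemma V_integrally_closed t : integral_over V t -> V t.
Proof.
move=> intt; apply: contrapT => nVt.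
have Vtu : adjoin V t u.
  apply: maxV; first exact: adjoin_subring.
    by move=> z; apply: adjoin_base.
  by exists t; split=> //; apply: adjoin_elt.
by apply/nVu/(integral_inverse_mod subV idQ Vy Quy QV); apply: integral_adjoin intt Vtu.
Qed.

Lemma adjoin_u_total t : adjoin V u t.
Proof.
have [p [monp Rp pt0]] := intR t.
set n := (size p).-1.
have [M VM] : exists M, forall i, (i < n)%N -> exists2 v, V v & Q (y ^+ M * p`_i - v).
  apply: ex_common_bound => i _; apply: (adjoin_inverse_mod subV idQ Vy Quy).
  have [q Sq ->] := maximal_subring_adjoin maxS subR Ru nSu (Rp i).
  by exists q => //; apply: poly_over_sub Sq.
have Vyt : V (y ^+ M * t).
  apply/V_integrally_closed/(integral_scale subV monp pt0) => i lt_in.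
  have [v Vv Qv] := VM i lt_in.
  have -> : (y ^+ M) ^+ (n - i) * p`_i = y ^+ (M * (n - i.+1)) * (y ^+ M * p`_i).
    by rewrite -exprM -(subnSK lt_in) mulnS exprD; ring.
  apply: (subringM subV); first exact: subringX.
  have -> : y ^+ M * p`_i = (y ^+ M * p`_i - v) + v by rewrite subrK.
  by apply: (subringD subV) => //; apply: QV.
have -> : t = (t - u ^+ M * (y ^+ M * t)) + u ^+ M * (y ^+ M * t) by rewrite subrK.
apply: (subringD (adjoin_subring u subV)).
  apply/adjoin_base/QV => //.
  have -> : t - u ^+ M * (y ^+ M * t) = - (((u * y) ^+ M - 1) * t) by rewrite exprMn; ring.
  by apply/(idealN idQ)/(idealMr idQ)/(ideal_expr_sub1 idQ).
exists ((y ^+ M * t) *: 'X^M); first by apply: (poly_overZ subV) => //; apply: poly_overXn.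
by rewrite hornerZ hornerXn mulrC.
Qed.

Lemma V_maximal : maximal_subring V (fun _ => True).
Proof.
split=> [|| W [subW _] VW [z [_ nWz]] t Wt]; [by [] | by exists u |].
apply: contrapT => nVt; apply: nWz.
apply: (adjoin_min subW VW _ (adjoin_u_total z)).
by apply: maxV => //; exists t.
Qed.

Lemma conductor_V x : conductor V (fun _ => True) x <-> Q x.
Proof.
split=> [[_ Vx] | Qx]; last by split=> // r _; apply/QV/(idealMl idQ).
apply: contrapT => nQx.
have [p [monp Rp px0]] := intR x.
have [|q Rq [Qqx nQq0]] := prime_relation_const primeQ nQx monp Rp.
  by rewrite (rootP px0); apply: ideal0 idQ.
have /condS[] // : conductor S R q`_0.
split=> [|r Rr]; first exact: Rq.
apply: (maximal_subring_cap maxS SV subR subV Ru nVu); first exact: subringM.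
have -> : r * q`_0 = r * q.[x] - r * (drop_poly 1 q).[x] * x.
  by rewrite (horner_drop_poly1 q x); ring.
by apply: (subringB subV); [apply/QV/(idealMl idQ) | apply: Vx].
Qed.

End MaximalAvoidingU.

Lemma exists_maximal_integrally_closed : exists V,
  [/\ maximal_subring V (fun _ => True), integrally_closed_in V (fun _ => True) &
      forall x, conductor V (fun _ => True) x <-> Q x].
Proof.
have nSQu : ~ add_ideal S Q u.
  case=> s Ss Qus; apply: nSu; rewrite -(subrK s u).
  apply: (subringD subS) => //; apply: contraction_sub_S Qus _.
  by apply: (subringB subR) => //; apply: SR.
have [V [subV SQV nVu maxV]] :=
  exists_maximal_subring_avoiding (add_ideal_subring idQ subS) nSQu.
have SV z : S z -> V z.
  by move=> Sz; apply: SQV; exists z; rewrite // subrr; apply: ideal0 idQ.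
have QV z : Q z -> V z.
  by move=> Qz; apply: SQV; exists 0; [apply: subring0 | rewrite subr0].
exists V; split; first exact: V_maximal.
  by move=> t _; apply: V_integrally_closed.
exact: conductor_V.
Qed.

End MaximalSubringOfT.

Theorem theorem3p4 (T : comNzRingType) (R : T -> Prop) (Q : T -> Prop)
  (S : T -> Prop) :
  is_subring R ->
  integral_extension R ->
  prime_ideal Q ->
  let P := fun x => Q x /\ R x in
  maximal_subring S R ->
  integrally_closed_in S R ->
  (forall x, conductor S R x <-> P x) ->
  (* U(R/P) is not contained in S/P *)
  (exists x, [/\ R x, (exists y, R y /\ P (x * y - 1))
                 & ~ (exists s, S s /\ P (x - s))]) ->
  exists V : T -> Prop,
    [/\ maximal_subring V (fun _ => True),
        integrally_closed_in V (fun _ => True) &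
        forall x, conductor V (fun _ => True) x <-> Q x].
Proof.
move=> subR intR primeQ P maxS icS condS [u [Ru [y [Ry [Quy _]]] nSPu]].
apply: (exists_maximal_integrally_closed subR intR primeQ maxS icS condS Ru Ry Quy).
move=> Su; apply: nSPu; exists u; split=> //; rewrite subrr.
by split; [apply: ideal0 (prime_ideal_ideal primeQ) | apply: subring0].
Qed.
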